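(* Let $0<\kappa<1$, $\lambda=\sqrt{1-\kappa^2}$, and let $k\in(0,1)$ be defined by $k^2=\frac{1-\lambda}{1+\lambda}$ (so that $\kappa^2=\frac{4k^2}{(1+k^2)^2}$). For $\phi$ near $0$ define $$u(\phi)=\int_0^{\phi} F\!\left(\tfrac14,\tfrac34;\tfrac12;\kappa^2\sin^2\theta\right)\,\mathrm{d}\theta ,$$ let $u\mapsto\phi(u)$ be the local inverse near $0$ with $\phi(0)=0$, and set $s(u)=\sin\phi(u)$. Let $\mathrm{sn},\mathrm{dn}$ be the Jacobian elliptic functions of modulus $k$. Then $$s^2(u)=\mathrm{sn}^2\!\left[(1+k^2)^{-1/2}u\right]\Big\{k^2+\mathrm{dn}^2\!\left[(1+k^2)^{-1/2}u\right]\Big\}.$$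
   Context: $F(a,b;c;z)$ denotes the Gauss hypergeometric function ${}_2F_1(a,b;c;z)$. $\mathrm{sn},\mathrm{cn},\mathrm{dn}$ are the standard Jacobian elliptic functions of modulus $k$. The identity holds near $u=0$ (and hence for the meromorphic extension of $s^2$). *)

From Stdlib Require Import Reals Lra ClassicalEpsilon.
From Coquelicot Require Import Coquelicot.
Open Scope R_scope.

Fixpoint poch (a : R) (n : nat) : R :=
  match n with
  | O => 1
  | S m => poch a m * (a + INR m)
  end.

Definition hyp2F1 (a b c z : R) : R :=
  Series (fun n => poch a n * poch b n / (poch c n * INR (Factorial.fact n)) * z ^ n).

Definition EllF (k phi : R) : R :=
  RInt (fun t => / sqrt (1 - k ^ 2 * (sin t) ^ 2)) 0 phi.

(* Jacobi amplitude: the inverse of phi |-> F(phi,k) (a strictly increasing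
   bijection R -> R for 0 < k < 1). *)
Definition jam (k u : R) : R :=
  epsilon (inhabits 0) (fun phi => EllF k phi = u).

Definition jsn (k u : R) : R := sin (jam k u).
Definition jdn (k u : R) : R := sqrt (1 - k ^ 2 * (jsn k u) ^ 2).

Definition Ufun (kappa phi : R) : R :=
  RInt (fun t => hyp2F1 (1/4) (3/4) (1/2) (kappa ^ 2 * (sin t) ^ 2)) 0 phi.

From Stdlib Require Import Reals Lra Lia Factorial ClassicalEpsilon.
From Coquelicot Require Import Coquelicot.
Open Scope R_scope.

(* F(1/4,3/4;1/2;x^2) = ((1 + x)^(-1/2) + (1 - x)^(-1/2)) / 2 is the even part of
   the binomial series of (1 - x)^(-1/2), so u(theta) is an elementary integral.
   With kappa = 2k/(1 + k^2), the substitution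
     sin theta = sin phi * sqrt (1 + k^2 cos^2 phi)
   transforms its integrand d theta into sqrt (1 + k^2) d phi / sqrt (1 - k^2 sin^2 phi);
   hence u(theta) = sqrt (1 + k^2) F(phi, k), i.e. phi = am (u / sqrt (1 + k^2)), and
   sin^2 theta = sn^2 (1 + k^2 cn^2) = sn^2 (k^2 + dn^2). *)

Lemma is_derive_continuity_pt (f : R -> R) x l :
  is_derive f x l -> continuity_pt f x.
Proof.
  intros Hf. apply continuity_pt_filterlim. apply (ex_derive_continuous f). now exists l.
Qed.

Lemma is_derive_eq_l (f : R -> R) (x l l' : R) : is_derive f x l -> l = l' -> is_derive f x l'.
Proof. now intros H <-. Qed.

Lemma MVT_everywhere (f df : R -> R) a b :
  (forall x, is_derive f x (df x)) ->
  exists c, Rmin a b <= c <= Rmax a b /\ f b - f a = df c * (b - a).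
Proof.
  intros Hf. apply MVT_gen; intros x _; [apply Hf|].
  now apply is_derive_continuity_pt with (df x).
Qed.

Lemma is_derive_zero_const (G : R -> R) r a :
  (forall x, Rabs x < r -> is_derive G x 0) -> Rabs a < r -> G a = G 0.
Proof.
  intros HG Ha. apply Rabs_def2 in Ha.
  assert (Hin : forall x, Rmin 0 a <= x <= Rmax 0 a -> Rabs x < r).
  { intros x Hx. apply Rabs_def1; unfold Rmin, Rmax in Hx; destruct Rle_dec; lra. }
  destruct (MVT_gen G 0 a (fun _ => 0)) as [c [_ Hc]].
  - intros x Hx. apply HG, Hin. lra.
  - intros x Hx. apply is_derive_continuity_pt with 0. now apply HG, Hin.
  - lra.
Qed.

Lemma is_derive_RInt_0 (f : R -> R) x :
  (forall t, continuous f t) -> is_derive (fun y => RInt f 0 y) x (f x).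
Proof.
  intros Hf. apply (is_derive_RInt f _ 0); [|apply Hf].
  apply filter_forall. intros b.
  exact (RInt_correct f 0 b (ex_RInt_continuous f 0 b (fun z _ => Hf z))).
Qed.

Lemma RInt_0_mean_value (f : R -> R) y :
  (forall t, continuous f t) ->
  exists c, Rmin 0 y <= c <= Rmax 0 y /\ RInt f 0 y = f c * y.
Proof.
  intros Hf.
  destruct (MVT_everywhere (fun y => RInt f 0 y) f 0 y) as [c [Hc E]].
  - intros x. now apply is_derive_RInt_0.
  - exists c. split; [exact Hc|]. rewrite RInt_point in E. unfold zero in E; simpl in E. lra.
Qed.

Lemma RInt_0_inj (f : R -> R) x y :
  (forall t, continuous f t) -> (forall t, 0 < f t) ->
  RInt f 0 x = RInt f 0 y -> x = y.
Proof.
  intros Hf Hpos E.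
  destruct (MVT_everywhere (fun y => RInt f 0 y) f x y) as [c [_ Hc]].
  - intros z. now apply is_derive_RInt_0.
  - rewrite E, Rminus_diag in Hc. specialize (Hpos c).
    symmetry in Hc. apply Rmult_integral in Hc. lra.
Qed.

Lemma is_derive_asin x : -1 < x < 1 -> is_derive asin x (/ sqrt (1 - x ^ 2)).
Proof.
  intros Hx. apply is_derive_Reals.
  replace (/ sqrt (1 - x ^ 2)) with (1 / sqrt (1 - x²))
    by (unfold Rsqr, Rdiv; rewrite Rmult_1_l; do 3 f_equal; ring).
  rewrite <- (derive_pt_asin x Hx). apply derive_pt_eq_1 with (derivable_pt_asin x Hx).
  reflexivity.
Qed.

Lemma CV_radius_gt_of_bounded (b : nat -> R) y :
  (forall n, Rabs (b n) <= 1) -> Rabs y < 1 -> Rbar_lt (Rabs y) (CV_radius b).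
Proof.
  intros Hb Hy. set (r := (1 + Rabs y) / 2).
  assert (Hr : 0 <= r < 1) by (unfold r; pose proof (Rabs_pos y); lra).
  apply Rbar_lt_le_trans with (Finite r); [simpl; unfold r; lra|].
  apply (proj1 (CV_radius_bounded b)). exists 1. intros n.
  rewrite Rabs_mult, <- RPow_abs, (Rabs_pos_eq r) by lra.
  assert (r ^ n <= 1) by (rewrite <- (pow1 n); apply pow_incr; lra).
  pose proof (Hb n). pose proof (Rabs_pos (b n)). pose proof (pow_le r n (proj1 Hr)). nra.
Qed.

Lemma poch_pos a n : 0 < a -> 0 < poch a n.
Proof.
  intros Ha. induction n as [|n IH]; simpl; [lra|].
  pose proof (pos_INR n). apply Rmult_lt_0_compat; lra.
Qed.

(* Taylor coefficients of (1 - y)^(-1/2). *)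
Definition binom_half (n : nat) : R := poch (1/2) n / INR (fact n).

Lemma binom_half_S n : binom_half (S n) = binom_half n * (1/2 + INR n) / INR (S n).
Proof.
  unfold binom_half. simpl poch. rewrite fact_simpl, mult_INR, S_INR.
  pose proof (INR_fact_lt_0 n). pose proof (pos_INR n). field. lra.
Qed.

Lemma binom_half_bounds n : 0 < binom_half n <= 1.
Proof.
  induction n as [|n IH]; [unfold binom_half; simpl; lra|].
  rewrite binom_half_S, S_INR. pose proof (pos_INR n).
  assert (Hq : 0 < (1/2 + INR n) / (INR n + 1) <= 1).
  { split; [apply Rdiv_lt_0_compat; lra|].
    apply Rmult_le_reg_r with (INR n + 1); [lra|]. field_simplify; lra. }
  unfold Rdiv in *. rewrite Rmult_assoc. split; [apply Rmult_lt_0_compat|]; nra.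
Qed.

Lemma Rabs_binom_half_le_1 n : Rabs (binom_half n) <= 1.
Proof. destruct (binom_half_bounds n). rewrite Rabs_pos_eq; lra. Qed.

Lemma PS_derive_binom_half n : PS_derive binom_half n = (1/2 + INR n) * binom_half n.
Proof.
  unfold PS_derive. rewrite binom_half_S, S_INR. pose proof (pos_INR n). field. lra.
Qed.

Lemma binom_half_ode y : Rabs y < 1 ->
  (1 - y) * PSeries (PS_derive binom_half) y = / 2 * PSeries binom_half y.
Proof.
  intros Hy.
  assert (E : ex_pseries (PS_derive binom_half) y).
  { apply ex_pseries_derive, CV_radius_gt_of_bounded; auto using Rabs_binom_half_le_1. }
  replace ((1 - y) * PSeries (PS_derive binom_half) y) with
    (PSeries (PS_derive binom_half) y - PSeries (PS_incr_1 (PS_derive binom_half)) y)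
    by (rewrite PSeries_incr_1; ring).
  rewrite <- PSeries_minus by auto using ex_pseries_incr_1. rewrite <- PSeries_scal.
  apply PSeries_ext. intros [|n]; unfold PS_minus, PS_scal, PS_incr_1; simpl;
    unfold plus, opp, scal, mult, zero; simpl; unfold mult; simpl;
    rewrite !PS_derive_binom_half.
  - simpl. field.
  - rewrite binom_half_S, S_INR. pose proof (pos_INR n). field. lra.
Qed.

(* [PSeries binom_half y * sqrt (1 - y)] has zero derivative by the ODE above. *)
Lemma PSeries_binom_half y : Rabs y < 1 -> PSeries binom_half y = / sqrt (1 - y).
Proof.
  intros Hy.
  assert (HG : forall x, Rabs x < 1 ->
            is_derive (fun x => PSeries binom_half x * sqrt (1 - x)) x 0).
  { intros x Hx. pose proof (Rabs_def2 _ _ Hx) as [Hx1 _].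
    assert (Hs : 0 < sqrt (1 - x)) by (apply sqrt_lt_R0; lra).
    assert (Hss : sqrt (1 - x) * sqrt (1 - x) = 1 - x) by (apply sqrt_sqrt; lra).
    assert (Dsqrt : is_derive (fun x => sqrt (1 - x)) x (- / (2 * sqrt (1 - x))))
      by (auto_derive; [lra | unfold Rminus; ring]).
    pose proof (is_derive_mult _ _ x _ _
      (is_derive_PSeries binom_half x
         (CV_radius_gt_of_bounded _ x Rabs_binom_half_le_1 Hx))
      Dsqrt Rmult_comm) as D.
    apply (is_derive_eq_l _ _ _ _ D).
    change (plus ?u ?v) with (u + v). change (mult ?u ?v) with (u * v).
    pose proof (binom_half_ode x Hx) as Hode. rewrite <- Hss in Hode.
    replace (PSeries binom_half x)
      with (2 * (sqrt (1 - x) * sqrt (1 - x) * PSeries (PS_derive binom_half) x)) by lra.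
    field. lra. }
  pose proof (is_derive_zero_const _ 1 y HG Hy) as E. simpl in E.
  rewrite PSeries_0, Rminus_0_r, sqrt_1 in E.
  replace (binom_half 0) with 1 in E by (unfold binom_half; simpl; field).
  assert (0 < sqrt (1 - y)) by (apply sqrt_lt_R0; apply Rabs_def2 in Hy; lra).
  apply Rmult_eq_reg_r with (sqrt (1 - y)); [|lra]. rewrite Rinv_l; lra.
Qed.

Lemma poch_quarter_duplication n :
  poch (1/4) n * poch (3/4) n * INR (fact (2 * n)) =
  poch (1/2) (2 * n) * poch (1/2) n * INR (fact n).
Proof.
  induction n as [|n IH]; [simpl; ring|].
  replace (2 * S n)%nat with (S (S (2 * n))) by lia.
  cbn [poch]. rewrite !fact_simpl, !mult_INR, !S_INR, mult_INR, !S_INR.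
  change (INR 0) with 0.
  transitivity (poch (1/4) n * poch (3/4) n * INR (fact (2 * n))
                * ((1/4 + INR n) * (3/4 + INR n) * (2 * INR n + 2) * (2 * INR n + 1))).
  - ring.
  - rewrite IH. field.
Qed.

Lemma hyp2F1_quarter_coef n :
  poch (1/4) n * poch (3/4) n / (poch (1/2) n * INR (fact n)) = binom_half (2 * n).
Proof.
  unfold binom_half. pose proof (poch_quarter_duplication n) as Hdup.
  pose proof (INR_fact_lt_0 n). pose proof (INR_fact_lt_0 (2 * n)).
  pose proof (poch_pos (1/2) n ltac:(lra)).
  field_simplify_eq; [|repeat split; lra]. rewrite Hdup. ring.
Qed.

Definition avg_inv_sqrt (x : R) : R := (/ sqrt (1 + x) + / sqrt (1 - x)) / 2.

Lemma hyp2F1_quarter_sq x : Rabs x < 1 ->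
  hyp2F1 (1/4) (3/4) (1/2) (x ^ 2) = avg_inv_sqrt x.
Proof.
  intros Hx.
  assert (Hx2 : Rabs (x ^ 2) < 1).
  { rewrite <- RPow_abs. pose proof (Rabs_pos x). simpl. nra. }
  assert (Hmx : Rabs (- x) < 1) by (rewrite Rabs_Ropp; exact Hx).
  assert (Ee : ex_pseries (fun n => binom_half (2 * n)) (x ^ 2))
    by (apply CV_radius_inside, CV_radius_gt_of_bounded; auto using Rabs_binom_half_le_1).
  assert (Eo : ex_pseries (fun n => binom_half (2 * n + 1)) (x ^ 2))
    by (apply CV_radius_inside, CV_radius_gt_of_bounded; auto using Rabs_binom_half_le_1).
  pose proof (PSeries_odd_even binom_half x Ee Eo) as Hpos.
  pose proof (PSeries_odd_even binom_half (- x)) as Hneg.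
  replace ((- x) ^ 2) with (x ^ 2) in Hneg by ring. specialize (Hneg Ee Eo).
  rewrite PSeries_binom_half in Hpos, Hneg by assumption.
  replace (1 - - x) with (1 + x) in Hneg by ring.
  unfold hyp2F1, avg_inv_sqrt.
  rewrite (Series_ext _ (fun n => binom_half (2 * n) * (x ^ 2) ^ n))
    by (intros n; now rewrite hyp2F1_quarter_coef).
  fold (PSeries (fun n => binom_half (2 * n)) (x ^ 2)). lra.
Qed.

Definition ufun_integrand (kappa t : R) : R := avg_inv_sqrt (kappa * sin t).

Lemma Rabs_mul_sin_lt_1 kappa t : 0 < kappa < 1 -> Rabs (kappa * sin t) < 1.
Proof.
  intros Hk. rewrite Rabs_mult, (Rabs_pos_eq kappa) by lra.
  assert (Rabs (sin t) <= 1) by (apply Rabs_le, SIN_bound).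
  pose proof (Rabs_pos (sin t)). nra.
Qed.

Lemma ufun_integrand_continuous kappa t : 0 < kappa < 1 ->
  continuous (ufun_integrand kappa) t.
Proof.
  intros Hk. apply (ex_derive_continuous (ufun_integrand kappa)).
  unfold ufun_integrand, avg_inv_sqrt.
  pose proof (Rabs_def2 _ _ (Rabs_mul_sin_lt_1 kappa t Hk)).
  auto_derive. repeat split; try lra; apply Rgt_not_eq, sqrt_lt_R0; lra.
Qed.

Lemma ufun_integrand_pos kappa t : 0 < kappa < 1 -> 0 < ufun_integrand kappa t.
Proof.
  intros Hk. unfold ufun_integrand, avg_inv_sqrt.
  pose proof (Rabs_def2 _ _ (Rabs_mul_sin_lt_1 kappa t Hk)).
  assert (0 < / sqrt (1 + kappa * sin t)) by (apply Rinv_0_lt_compat, sqrt_lt_R0; lra).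
  assert (0 < / sqrt (1 - kappa * sin t)) by (apply Rinv_0_lt_compat, sqrt_lt_R0; lra).
  lra.
Qed.

Lemma Ufun_RInt kappa phi : 0 < kappa < 1 ->
  Ufun kappa phi = RInt (ufun_integrand kappa) 0 phi.
Proof.
  intros Hk. unfold Ufun. apply RInt_ext. intros t _.
  rewrite <- Rpow_mult_distr. now apply hyp2F1_quarter_sq, Rabs_mul_sin_lt_1.
Qed.

Lemma Ufun_inj kappa x y : 0 < kappa < 1 -> Ufun kappa x = Ufun kappa y -> x = y.
Proof.
  intros Hk E. rewrite !Ufun_RInt in E by exact Hk.
  apply (RInt_0_inj (ufun_integrand kappa)); [| | exact E].
  - intros t. now apply ufun_integrand_continuous.
  - intros t. now apply ufun_integrand_pos.
Qed.

Definition ellF_integrand (k t : R) : R := / sqrt (1 - k ^ 2 * sin t ^ 2).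

Lemma sin_sq_add_cos_sq t : sin t ^ 2 + cos t ^ 2 = 1.
Proof. pose proof (sin2_cos2 t). unfold Rsqr in *. lra. Qed.

Section Modulus.

Variable k : R.
Hypothesis Hk : 0 < k < 1.

Lemma one_sub_k2_sin_sq_pos t : 0 < 1 - k ^ 2 * sin t ^ 2.
Proof.
  pose proof (sin_sq_add_cos_sq t). pose proof (pow2_ge_0 (cos t)).
  pose proof (pow2_ge_0 (sin t)). nra.
Qed.

Lemma ellF_integrand_continuous t : continuous (ellF_integrand k) t.
Proof.
  apply (ex_derive_continuous (ellF_integrand k)). unfold ellF_integrand.
  pose proof (one_sub_k2_sin_sq_pos t).
  auto_derive. repeat split; [lra | apply Rgt_not_eq, sqrt_lt_R0; lra].
Qed.

Lemma ellF_integrand_ge_1 t : 1 <= ellF_integrand k t.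
Proof.
  unfold ellF_integrand. pose proof (one_sub_k2_sin_sq_pos t) as Hpos.
  assert (Hle : sqrt (1 - k ^ 2 * sin t ^ 2) <= sqrt 1).
  { apply sqrt_le_1_alt. pose proof (pow2_ge_0 k). pose proof (pow2_ge_0 (sin t)). nra. }
  rewrite sqrt_1 in Hle.
  rewrite <- Rinv_1 at 1. apply Rinv_le_contravar; [apply sqrt_lt_R0|]; lra.
Qed.

Lemma EllF_scale a : exists m, 1 <= m /\ EllF k a = m * a.
Proof.
  destruct (RInt_0_mean_value (ellF_integrand k) a ellF_integrand_continuous)
    as [c [_ E]].
  exists (ellF_integrand k c). split; [apply ellF_integrand_ge_1 | exact E].
Qed.

Lemma Rabs_le_Rabs_EllF a : Rabs a <= Rabs (EllF k a).
Proof.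
  destruct (EllF_scale a) as [m [Hm ->]].
  rewrite Rabs_mult, (Rabs_pos_eq m) by lra. pose proof (Rabs_pos a). nra.
Qed.

Lemma EllF_jam v : EllF k (jam k v) = v.
Proof.
  unfold jam. apply epsilon_spec.
  assert (Hcont : continuity (EllF k)).
  { intros x. apply is_derive_continuity_pt with (ellF_integrand k x).
    apply is_derive_RInt_0, ellF_integrand_continuous. }
  destruct (EllF_scale (Rabs v)) as [m [Hm Ep]].
  destruct (EllF_scale (- Rabs v)) as [m' [Hm' En]].
  pose proof (Rabs_pos v). pose proof (proj1 (Rabs_le_between v (Rabs v)) (Rle_refl _)).
  destruct (IVT_gen (EllF k) (- Rabs v) (Rabs v) v Hcont) as [x [_ Hx]].
  - rewrite Ep, En, Rmin_left, Rmax_right by nra. nra.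
  - now exists x.
Qed.

Definition sigma (a : R) : R := sin a * sqrt (1 + k ^ 2 * cos a ^ 2).

Lemma one_add_k2_cos_sq_ge_1 a : 1 <= 1 + k ^ 2 * cos a ^ 2.
Proof. pose proof (pow2_ge_0 k). pose proof (pow2_ge_0 (cos a)). nra. Qed.

Lemma sigma_sq a :
  sigma a ^ 2 = sin a ^ 2 * (k ^ 2 + sqrt (1 - k ^ 2 * sin a ^ 2) ^ 2).
Proof.
  unfold sigma. pose proof (one_add_k2_cos_sq_ge_1 a). pose proof (one_sub_k2_sin_sq_pos a).
  rewrite Rpow_mult_distr, !pow2_sqrt by lra.
  pose proof (sin_sq_add_cos_sq a). nra.
Qed.

Lemma one_sub_sigma_sq a :
  1 - sigma a ^ 2 = (cos a * sqrt (1 - k ^ 2 * sin a ^ 2)) ^ 2.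
Proof.
  rewrite sigma_sq, Rpow_mult_distr, pow2_sqrt by (apply Rlt_le, one_sub_k2_sin_sq_pos).
  pose proof (sin_sq_add_cos_sq a). nra.
Qed.

Lemma sigma_bounds a : Rabs a < PI / 2 -> -1 < sigma a < 1.
Proof.
  intros Ha. apply Rabs_def2 in Ha.
  assert (0 < cos a) by (apply cos_gt_0; lra).
  assert (0 < sqrt (1 - k ^ 2 * sin a ^ 2)) by apply sqrt_lt_R0, one_sub_k2_sin_sq_pos.
  assert (0 < 1 - sigma a ^ 2) by (rewrite one_sub_sigma_sq; apply pow_lt; nra).
  split; nra.
Qed.

Lemma kappa_bounds : 0 < 2 * k / (1 + k ^ 2) < 1.
Proof.
  split; [apply Rdiv_lt_0_compat; nra|].
  apply Rmult_lt_reg_r with (1 + k ^ 2); [nra|]. field_simplify; nra.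
Qed.

Lemma sigma_0 : sigma 0 = 0.
Proof. unfold sigma. rewrite sin_0. ring. Qed.

Lemma pow2_sqrt_one_add_k2_cos_sq a :
  sqrt (1 + k ^ 2 * cos a ^ 2) ^ 2 = 1 + k ^ 2 - k ^ 2 * sin a ^ 2.
Proof.
  rewrite pow2_sqrt by (pose proof (one_add_k2_cos_sq_ge_1 a); lra).
  pose proof (sin_sq_add_cos_sq a). nra.
Qed.

(* [sqrt (1 +- kappa sigma) = (W +- k sin a) / sqrt (1 + k^2)], with [W = sqrt (1 + k^2 cos^2 a)]. *)
Lemma ufun_integrand_asin_sigma a : Rabs a < PI / 2 ->
  ufun_integrand (2 * k / (1 + k ^ 2)) (asin (sigma a)) =
  sqrt (1 + k ^ 2) * sqrt (1 + k ^ 2 * cos a ^ 2) / (1 + k ^ 2 - 2 * k ^ 2 * sin a ^ 2).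
Proof.
  intros Ha. pose proof (sigma_bounds a Ha) as Hsig. pose proof kappa_bounds as Hkappa.
  unfold ufun_integrand, avg_inv_sqrt. rewrite sin_asin by lra.
  pose proof (pow2_sqrt_one_add_k2_cos_sq a) as HW2.
  assert (HW : 1 <= sqrt (1 + k ^ 2 * cos a ^ 2)).
  { rewrite <- sqrt_1 at 1. apply sqrt_le_1_alt, one_add_k2_cos_sq_ge_1. }
  assert (Hsigma : sigma a = sin a * sqrt (1 + k ^ 2 * cos a ^ 2)) by reflexivity.
  assert (Hs : 0 < sqrt (1 + k ^ 2)) by (apply sqrt_lt_R0; nra).
  assert (Hs2 : sqrt (1 + k ^ 2) ^ 2 = 1 + k ^ 2) by (apply pow2_sqrt; nra).
  set (W := sqrt (1 + k ^ 2 * cos a ^ 2)) in *. set (s := sqrt (1 + k ^ 2)) in *.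
  set (S := sin a) in *. pose proof (SIN_bound a) as HS. fold S in HS.
  assert (Eplus : sqrt (1 + 2 * k / (1 + k ^ 2) * sigma a) = (W + k * S) / s).
  { apply sqrt_lem_1; [nra | apply Rdiv_le_0_compat; nra |].
    replace ((W + k * S) / s * ((W + k * S) / s))
      with ((W ^ 2 + 2 * k * S * W + k ^ 2 * S ^ 2) / s ^ 2) by (field; lra).
    rewrite HW2, Hs2, Hsigma. field. nra. }
  assert (Eminus : sqrt (1 - 2 * k / (1 + k ^ 2) * sigma a) = (W - k * S) / s).
  { apply sqrt_lem_1; [nra | apply Rdiv_le_0_compat; nra |].
    replace ((W - k * S) / s * ((W - k * S) / s))
      with ((W ^ 2 - 2 * k * S * W + k ^ 2 * S ^ 2) / s ^ 2) by (field; lra).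
    rewrite HW2, Hs2, Hsigma. field. nra. }
  rewrite Eplus, Eminus.
  replace (1 + k ^ 2 - 2 * k ^ 2 * S ^ 2) with (W ^ 2 - k ^ 2 * S ^ 2) by (rewrite HW2; ring).
  field. repeat split; nra.
Qed.

Lemma is_derive_asin_sigma a : Rabs a < PI / 2 ->
  is_derive (fun x => asin (sigma x)) a
    ((1 + k ^ 2 - 2 * k ^ 2 * sin a ^ 2) /
     (sqrt (1 + k ^ 2 * cos a ^ 2) * sqrt (1 - k ^ 2 * sin a ^ 2))).
Proof.
  intros Ha. pose proof (sigma_bounds a Ha) as Hsig.
  assert (HC : 0 < cos a) by (apply Rabs_def2 in Ha; apply cos_gt_0; lra).
  pose proof (one_add_k2_cos_sq_ge_1 a) as HW1.
  assert (HD : 0 < sqrt (1 - k ^ 2 * sin a ^ 2)) by apply sqrt_lt_R0, one_sub_k2_sin_sq_pos.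
  assert (HW : 0 < sqrt (1 + k ^ 2 * cos a ^ 2)) by (apply sqrt_lt_R0; lra).
  assert (Dsigma : is_derive sigma a
    (cos a * sqrt (1 + k ^ 2 * cos a ^ 2)
     - k ^ 2 * cos a * sin a ^ 2 / sqrt (1 + k ^ 2 * cos a ^ 2))).
  { unfold sigma. auto_derive; [lra|].
    replace (1 + k * (k * 1) * (cos a * (cos a * 1))) with (1 + k ^ 2 * cos a ^ 2) by ring.
    field. lra. }
  pose proof (is_derive_comp asin sigma a _ _ (is_derive_asin _ Hsig) Dsigma) as D.
  rewrite one_sub_sigma_sq, sqrt_pow2 in D by nra.
  apply (is_derive_eq_l _ _ _ _ D). change (scal ?u ?v) with (u * v).
  replace (1 + k ^ 2 - 2 * k ^ 2 * sin a ^ 2)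
    with (sqrt (1 + k ^ 2 * cos a ^ 2) ^ 2 - k ^ 2 * sin a ^ 2)
    by (rewrite pow2_sqrt_one_add_k2_cos_sq; ring).
  field. lra.
Qed.

Lemma Ufun_asin_sigma a : Rabs a < PI / 2 ->
  Ufun (2 * k / (1 + k ^ 2)) (asin (sigma a)) = sqrt (1 + k ^ 2) * EllF k a.
Proof.
  intros Ha. pose proof kappa_bounds as Hkappa.
  set (kappa := 2 * k / (1 + k ^ 2)) in *.
  assert (HG : forall x, Rabs x < PI / 2 ->
    is_derive (fun x => RInt (ufun_integrand kappa) 0 (asin (sigma x))
                        - sqrt (1 + k ^ 2) * EllF k x) x 0).
  { intros x Hx.
    pose proof (is_derive_comp _ _ x _ _
      (is_derive_RInt_0 _ _ (fun t => ufun_integrand_continuous kappa t Hkappa))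
      (is_derive_asin_sigma x Hx)) as DU.
    pose proof (is_derive_RInt_0 (ellF_integrand k) x ellF_integrand_continuous) as DF.
    pose proof (is_derive_minus _ _ x _ _ DU (is_derive_scal _ x (sqrt (1 + k ^ 2)) _ DF))
      as D.
    apply (is_derive_eq_l _ _ _ _ D).
    change (minus ?u ?v) with (u - v). change (scal ?u ?v) with (u * v).
    rewrite ufun_integrand_asin_sigma by exact Hx. unfold ellF_integrand.
    pose proof (one_add_k2_cos_sq_ge_1 x).
    assert (0 < sqrt (1 - k ^ 2 * sin x ^ 2)) by apply sqrt_lt_R0, one_sub_k2_sin_sq_pos.
    assert (0 < sqrt (1 + k ^ 2 * cos x ^ 2)) by (apply sqrt_lt_R0; lra).
    assert (0 < 1 + k ^ 2 - 2 * k ^ 2 * sin x ^ 2).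
    { pose proof (one_sub_k2_sin_sq_pos x). pose proof (sin_sq_add_cos_sq x).
      pose proof (Rmult_le_pos _ _ (pow2_ge_0 k) (pow2_ge_0 (cos x))). nra. }
    field. lra. }
  pose proof (is_derive_zero_const _ _ a HG Ha) as E. cbv beta in E.
  assert (U0 : RInt (ufun_integrand kappa) 0 0 = 0) by (rewrite RInt_point; reflexivity).
  assert (F0 : EllF k 0 = 0) by (unfold EllF; rewrite RInt_point; reflexivity).
  rewrite sigma_0, asin_0, U0, F0 in E.
  rewrite Ufun_RInt by exact Hkappa. lra.
Qed.

End Modulus.

Lemma kappa_of_modulus kappa k : 0 < kappa < 1 -> 0 < k < 1 ->
  k ^ 2 = (1 - sqrt (1 - kappa ^ 2)) / (1 + sqrt (1 - kappa ^ 2)) ->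
  kappa = 2 * k / (1 + k ^ 2).
Proof.
  intros Hkappa Hk Hk2.
  assert (Hl2 : sqrt (1 - kappa ^ 2) ^ 2 = 1 - kappa ^ 2) by (apply pow2_sqrt; nra).
  pose proof (sqrt_pos (1 - kappa ^ 2)) as Hl0.
  set (lambda := sqrt (1 - kappa ^ 2)) in *.
  assert (Hl : lambda = (1 - k ^ 2) / (1 + k ^ 2)) by (rewrite Hk2; field; lra).
  apply Rsqr_inj; [lra | apply Rlt_le, kappa_bounds, Hk |].
  unfold Rsqr. replace (kappa * kappa) with (1 - lambda ^ 2) by lra.
  rewrite Hl. field. nra.
Qed.

Theorem theorem9 (kappa lambda k : R) :
  0 < kappa < 1 ->
  lambda = sqrt (1 - kappa ^ 2) ->
  0 < k < 1 ->
  k ^ 2 = (1 - lambda) / (1 + lambda) ->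
  exists delta : R, 0 < delta /\
    forall phi : R -> R,
      phi 0 = 0 ->
      (forall u, Rabs u < delta -> Ufun kappa (phi u) = u) ->
      forall u, Rabs u < delta ->
        (sin (phi u)) ^ 2 =
          (jsn k (u / sqrt (1 + k ^ 2))) ^ 2 *
          (k ^ 2 + (jdn k (u / sqrt (1 + k ^ 2))) ^ 2).
Proof.
  intros Hkappa -> Hk Hk2.
  pose proof (kappa_of_modulus kappa k Hkappa Hk Hk2) as ->.
  exists 1. split; [lra|].
  (* [phi u] is pinned down by the injectivity of [Ufun]. *)
  intros phi _ Hphi u Hu.
  set (s := sqrt (1 + k ^ 2)).
  assert (Hs : 1 <= s) by (unfold s; rewrite <- sqrt_1 at 1; apply sqrt_le_1_alt; nra).
  set (a := jam k (u / s)).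
  assert (Hv : EllF k a = u / s) by apply EllF_jam, Hk.
  assert (Ha : Rabs a < PI / 2).
  { pose proof (Rabs_le_Rabs_EllF k Hk a) as Hle. rewrite Hv in Hle.
    unfold Rdiv in Hle. rewrite Rabs_mult, Rabs_inv, (Rabs_pos_eq s) in Hle by lra.
    pose proof (Rabs_pos u). pose proof PI2_1.
    assert (/ s <= 1) by (rewrite <- Rinv_1; apply Rinv_le_contravar; lra). nra. }
  assert (Hphi_u : phi u = asin (sigma k a)).
  { apply (Ufun_inj (2 * k / (1 + k ^ 2))); [apply kappa_bounds, Hk|].
    rewrite Hphi, Ufun_asin_sigma, Hv by auto. fold s. field. lra. }
  pose proof (sigma_bounds k Hk a Ha).
  rewrite Hphi_u, sin_asin, sigma_sq by (auto || lra). reflexivity.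
Qed.
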